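(* Let $\rho=\sum_{i=0}^n\lambda_i|D_n^i\rangle\langle D_n^i|$ with $\lambda_i\ge0$, $\sum_i\lambda_i=1$, and let $1\le k\le n$. Suppose the linear system in the unknowns $(a_{0},\dots,a_{n})$ $$\sum_{i=0}^n a_{i}\frac{\binom{k}{s}\binom{n-k}{i-s}}{\binom{n}{i}}=\sum_{i=0}^n\lambda_i\frac{\binom{k}{s}\binom{n-k}{i-s}}{\binom{n}{i}},\qquad 0\le s\le k,$$ has a solution with $a_i\ge0$ for all $i$ and $(a_0,\dots,a_n)\ne(\lambda_0,\dots,\lambda_n)$. Then $L(\rho)\ge k+1$.
   Context: Convention: $\binom{m}{i}=0$ if $i<0$ or $i>m$. Dicke states: $|D_n^i\rangle=\binom{n}{i}^{-1/2}\sum_{s\in\{0,1\}^n,\ \sum_js_j=i}|s_1\rangle\otimes\cdots\otimes|s_n\rangle$. For $S\subseteq[n]$, $\rho_S$ is the partial trace of $\rho$ over qubits outside $S$; $\mathcal C(\rho,\mathcal S)=\{\sigma\text{ density matrix}:\sigma_S=\rho_S\ \forall S\in\mathcal S\}$; $\mathcal S$ determines $\rho$ if $\mathcal C(\rho,\mathcal S)=\{\rho\}$; $L(\rho)=\min_{\mathcal S\text{ determines }\rho}\max_{S\in\mathcal S}|S|$. *)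

From HB Require Import structures.
From mathcomp Require Import all_boot all_order all_algebra.
From mathcomp Require Import boolp reals complex.
Set Implicit Arguments. Unset Strict Implicit. Unset Printing Implicit Defensive.
Import Order.TTheory GRing.Theory Num.Theory.
Local Open Scope ring_scope.

(* computational basis of n qubits: bit strings s = (s_1,...,s_n) *)
Definition bits (n : nat) := {ffun 'I_n -> bool}.

(* operators on (C^2)^{\otimes n}, written in the computational basis:
   A x y = <x|A|y> *)
Definition op (R : realType) (n : nat) := bits n -> bits n -> R[i].

Definition is_density (R : realType) (n : nat) (A : op R n) : Prop :=
  (forall x y, A y x = (A x y)^*) /\
  (forall v : bits n -> R[i], 0 <= \sum_(x : bits n) \sum_(y : bits n) (v x)^* * A x y * v y) /\
  \sum_(x : bits n) A x x = 1.

Definition merge (n : nat) (S : {set 'I_n}) (x z : bits n) : bits n :=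
  [ffun i => if i \in S then x i else z i].

(* partial trace over the qubits outside S.  rho_S is represented as a
   function on pairs of full bit strings which only depends on the bits in S:
   rho_S x y = sum over assignments z of the qubits outside S of
   <x|_S <z| rho |y>_S |z>. *)
Definition ptrace (R : realType) (n : nat) (S : {set 'I_n}) (A : op R n) : op R n :=
  fun x y => \sum_(z : bits n | [forall i, (i \in S) ==> ~~ z i])
               A (merge S x z) (merge S y z).

Definition determines (R : realType) (n : nat) (A : op R n) (F : {set {set 'I_n}}) : Prop :=
  forall B : op R n, is_density B ->
    (forall S, S \in F -> ptrace S B = ptrace S A) -> B = A.

(* L(rho) = min over determining families of the max size of a member.
   (The family {[n]} always determines rho, so the min is over a nonempty
   set; the default value n is never below the true minimum.) *)
Definition Lval (R : realType) (n : nat) (A : op R n) : nat :=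
  \big[minn/n]_(F : {set {set 'I_n}} | `[< determines A F >]) \max_(S in F) #|S|.

Definition weight (n : nat) (x : bits n) : nat := #|[set j | x j]|.

Definition dicke (R : realType) (n i : nat) (x : bits n) : R[i] :=
  if weight x == i then real_complex R ((Num.sqrt ('C(n, i)%:R : R))^-1) else 0.

Definition dicke_mix (R : realType) (n : nat) (lam : 'I_n.+1 -> R) : op R n :=
  fun x y => \sum_(i < n.+1) real_complex R (lam i) * @dicke R n i x * (@dicke R n i y)^*.

Definition binomZ (m : nat) (j : int) : nat :=
  match j with Posz j' => 'C(m, j') | Negz _ => 0%N end.

Definition coef (R : realType) (n k s i : nat) : R :=
  ('C(k, s) * binomZ (n - k) (i%:Z - s%:Z))%:R / ('C(n, i))%:R.

From Pilot Require Import Defs.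
From HB Require Import structures.
From mathcomp Require Import all_boot all_order all_algebra.
From mathcomp Require Import boolp reals complex.
From mathcomp Require Import ring zify.
Import Order.TTheory GRing.Theory Num.Theory.
Local Open Scope ring_scope.
Set Implicit Arguments. Unset Strict Implicit.

(* A Dicke mixture is diagonal in the Hamming weight, so its marginal on a
   set S of size m only sees the weight t of the bits in S, through the
   number F_c(m, t) = sum_i C(n - m, i - t) c_i / C(n, i).  The linear system
   of the hypothesis says exactly F_a(k, .) = F_lam(k, .), and the Pascal rule
   F(m, t) = F(m + 1, t) + F(m + 1, t + 1) propagates this to every m <= k.
   Hence the mixture with weights a is a second density matrix with the same
   k-body marginals as rho, and no family of sets of size <= k determines rho. *)

Section Weights.
Variable n : nat.

Definition vanishes_on (S : {set 'I_n}) (z : bits n) : bool :=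
  [forall i, (i \in S) ==> ~~ z i].

Definition weight_on (S : {set 'I_n}) (x : bits n) : nat := #|[set j in S | x j]|.

Lemma weight_le (x : bits n) : (weight x <= n)%N.
Proof. by rewrite /weight; apply: leq_trans (max_card _) _; rewrite card_ord. Qed.

Lemma weight_on_le S (x : bits n) : (weight_on S x <= #|S|)%N.
Proof. by apply: subset_leq_card; apply/subsetP => j; rewrite inE => /andP[]. Qed.

Lemma weight_on0 (x : bits n) : weight_on set0 x = 0%N.
Proof. by apply/eqP; rewrite cards_eq0; apply/eqP/setP => j; rewrite !inE. Qed.

Lemma weight_vanishes_on S (z : bits n) :
  vanishes_on S z -> (weight z <= #|~: S|)%N.
Proof.
move=> /forallP hz; apply: subset_leq_card; apply/subsetP => j.
by rewrite !inE => zj; apply/negP => jS; move: (hz j); rewrite jS zj.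
Qed.

Lemma weight_merge S (x z : bits n) : vanishes_on S z ->
  weight (Defs.merge S x z) = (weight_on S x + weight z)%N.
Proof.
move=> /forallP hz; rewrite /weight /weight_on -cardsUI.
have -> : [set j in S | x j] :&: [set j | z j] = set0.
  apply/setP => j; rewrite !inE; apply/negP => /andP[/andP[jS _] zj].
  by move: (hz j); rewrite jS zj.
rewrite [#|set0|]cards0 addn0; apply: eq_card => j; rewrite !inE ffunE.
case jS: (j \in S) => //=.
by move: (hz j); rewrite jS => /negbTE ->; rewrite orbF.
Qed.

Lemma card_vanishes_on_weight S j :
  #|[set z : bits n | vanishes_on S z && (weight z == j)]| = 'C(#|~: S|, j).
Proof.
rewrite -cards_draws.
pose supp (z : bits n) : {set 'I_n} := [set i | z i].
have supp_inj : injective supp.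
  move=> z1 z2 /setP h; apply/ffunP => i; move: (h i); rewrite !inE.
  by case: (z1 i); case: (z2 i).
rewrite -(card_imset _ supp_inj); apply: eq_card => A; rewrite !inE.
apply/imsetP/andP => [[z] | [sA cA]].
  rewrite inE => /andP[/forallP hz wz] ->; split=> //.
  apply/subsetP => i; rewrite !inE => zi; apply/negP => iS.
  by move: (hz i); rewrite iS zi.
have suppA : supp [ffun i => i \in A] = A by apply/setP => i; rewrite !inE ffunE.
exists [ffun i => i \in A]; last by rewrite suppA.
rewrite inE /weight -/(supp _) suppA cA andbT.
apply/forallP => i; apply/implyP => iS; rewrite ffunE; apply/negP => iA.
by move: (subsetP sA i iA); rewrite inE iS.
Qed.

End Weights.

Lemma binomZS N d : binomZ N.+1 d = (binomZ N d + binomZ N (d - 1))%N.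
Proof.
case: d => [[|d]|d]; first by rewrite (_ : Posz 0 - 1 = Negz 0) //= !bin0.
  by rewrite (_ : Posz d.+1 - 1 = Posz d) ?binS // -[d.+1]addn1 PoszD addrK.
by rewrite (_ : Negz d - 1 = Negz d.+1) // !NegzE -opprD -PoszD addn1.
Qed.

Lemma binomZ_subn N i t : (t <= i)%N -> binomZ N (i%:Z - t%:Z) = 'C(N, i - t).
Proof. by move=> h; rewrite subzn. Qed.

Lemma binomZ_lt N i t : (i < t)%N -> binomZ N (i%:Z - t%:Z) = 0%N.
Proof.
move=> h; rewrite (_ : i%:Z - t%:Z = Negz (t - i).-1) // NegzE; lia.
Qed.

Section DickeMixture.
Variables (R : realType) (n : nat).
Implicit Types (c : 'I_n.+1 -> R) (S : {set 'I_n}) (x y : bits n).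

(* the diagonal entry of [dicke_mix c] on a bit string of weight i *)
Definition dicke_entry c (i : nat) : R := c (inord i) / 'C(n, i)%:R.

Definition dicke_marginal c (m t : nat) : R :=
  \sum_(i < n.+1) (binomZ (n - m) (i%:Z - t%:Z))%:R * dicke_entry c i.

Lemma sum_vanishes_on (G : nat -> R) S t : (t <= #|S|)%N ->
  \sum_(z : bits n | vanishes_on S z) G (t + weight z)%N =
  \sum_(i < n.+1) (binomZ (n - #|S|) (i%:Z - t%:Z))%:R * G i.
Proof.
move=> ht; have cardSC := cardsC S; rewrite card_ord in cardSC.
have split_weight z : vanishes_on S z ->
    G (t + weight z)%N = \sum_(i < n.+1) ((t + weight z)%N == i)%:R * G i.
  move=> hz; have hlt : (t + weight z < n.+1)%N.
    by have := weight_vanishes_on hz; lia.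
  rewrite (bigD1 (Ordinal hlt)) //= eqxx mul1r big1 ?addr0 // => i hi.
  by case: eqP => [e|_]; [move: hi; rewrite -val_eqE /= -e eqxx | rewrite mul0r].
rewrite (eq_bigr _ split_weight) exchange_big /=; apply: eq_bigr => i _.
rewrite -mulr_suml -natr_sum; congr (_%:R * _).
have [hti|hit] := leqP t i; last first.
  rewrite binomZ_lt // big1 // => z _.
  by rewrite (_ : (t + weight z == i)%N = false) //; apply/negbTE/eqP; lia.
rewrite binomZ_subn // (_ : (n - #|S|)%N = #|~: S|); last by lia.
rewrite -card_vanishes_on_weight -sum1_card big_mkcond [RHS]big_mkcond /=.
apply: eq_bigr => z _; rewrite inE; case: (vanishes_on S z) => //=.
by rewrite (_ : (t + weight z == i)%N = (weight z == i - t)%N) //; apply/eqP/eqP; lia.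
Qed.

Lemma conjC_real_complex (r : R) : (real_complex R r)^* = real_complex R r.
Proof. exact: conjc_real. Qed.

Lemma dicke_mixE c x y : dicke_mix c x y =
  if weight x == weight y then real_complex R (dicke_entry c (weight x)) else 0.
Proof.
have hw : (weight x < n.+1)%N by rewrite ltnS weight_le.
rewrite /dicke_mix (bigD1 (inord (weight x))) //= big1 ?addr0; last first.
  move=> i hi; rewrite /dicke (_ : (weight x == i) = false) ?mulr0 ?mul0r //.
  by apply/negbTE; apply: contra hi => /eqP e; apply/eqP/val_inj; rewrite /= inordK.
rewrite /dicke inordK // eqxx [weight y == weight x]eq_sym.
case: eqP => _; last by rewrite conjC0 mulr0.
rewrite conjC_real_complex -!rmorphM; congr (real_complex R _).
by rewrite /dicke_entry -mulrA -expr2 exprVn sqr_sqrtr ?ler0n.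
Qed.

Lemma ptrace_dicke_mix c S x y : ptrace S (dicke_mix c) x y =
  if weight_on S x == weight_on S y
  then real_complex R (dicke_marginal c #|S| (weight_on S x)) else 0.
Proof.
rewrite /ptrace.
under eq_bigr => z hz do rewrite dicke_mixE !(weight_merge _ hz) eqn_add2r.
have [_|ne] := eqVneq (weight_on S x) (weight_on S y); last by rewrite big1.
by rewrite -rmorph_sum (sum_vanishes_on (dicke_entry c)) ?weight_on_le.
Qed.

Lemma dicke_marginal00 c : dicke_marginal c 0 0 = \sum_(i < n.+1) c i.
Proof.
apply: eq_bigr => i _; rewrite binomZ_subn // !subn0 /dicke_entry inord_val.
by rewrite mulrCA divff ?mulr1 // pnatr_eq0 -lt0n bin_gt0 -ltnS.
Qed.

Lemma dicke_marginalS c m t : (m < n)%N ->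
  dicke_marginal c m t = dicke_marginal c m.+1 t + dicke_marginal c m.+1 t.+1.
Proof.
move=> hm; rewrite /dicke_marginal -big_split; apply: eq_bigr => i _ /=.
rewrite (_ : (n - m)%N = (n - m.+1).+1); last by lia.
rewrite binomZS natrD mulrDl.
by rewrite (_ : i%:Z - t%:Z - 1 = i%:Z - t.+1%:Z) // -[t.+1]addn1 PoszD opprD addrA.
Qed.

Lemma dicke_marginal_eq_le c c' k : (k <= n)%N ->
    (forall t, (t <= k)%N -> dicke_marginal c k t = dicke_marginal c' k t) ->
  forall m t, (m <= k)%N -> (t <= m)%N -> dicke_marginal c m t = dicke_marginal c' m t.
Proof.
elim: k => [|k IH] hkn hk m t hm ht; first by move: hm ht; rewrite leqn0 => /eqP ->; apply: hk.
have [em|hmk] := eqVneq m k.+1; first by rewrite em; apply: hk; rewrite -em.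
have mk : (m <= k)%N by rewrite -ltnS ltn_neqAle hmk hm.
apply: (IH (ltnW hkn) _ m t mk ht).
by move=> s hs; rewrite !(dicke_marginalS _ _ hkn) !hk //; lia.
Qed.

Lemma trace_ptrace0 (A : op R n) :
  \sum_(x : bits n) A x x = ptrace set0 A [ffun => false] [ffun => false].
Proof.
apply: eq_big => [z|z _]; first by apply/esym/forallP => i; rewrite inE.
by congr (A _ _); apply/ffunP => i; rewrite ffunE inE.
Qed.

Lemma ptrace_setT (A : op R n) : ptrace setT A = A.
Proof.
apply/funext => x; apply/funext => y; rewrite /ptrace (big_pred1 [ffun => false]).
  by congr (A _ _); apply/ffunP => i; rewrite ffunE in_setT.
move=> z /=; apply/forallP/eqP => [h|-> i]; last by rewrite ffunE implybT.
by apply/ffunP => i; move: (h i); rewrite in_setT ffunE; case: (z i).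
Qed.

Lemma is_density_dicke_mix c :
  (forall i, 0 <= c i) -> \sum_(i < n.+1) c i = 1 -> is_density (dicke_mix c).
Proof.
move=> c_ge0 c_sum1; split; last split.
- move=> x y; rewrite !dicke_mixE [weight y == weight x]eq_sym.
  by case: eqP => [->|_]; rewrite ?conjC_real_complex ?conjC0.
- move=> v; pose amp i := \sum_(x : bits n) (v x)^* * dicke R i x.
  suff -> : \sum_x \sum_y (v x)^* * dicke_mix c x y * v y =
            \sum_(i < n.+1) real_complex R (c i) * (amp i * (amp i)^*).
    by apply: sumr_ge0 => i _; rewrite mulr_ge0 ?ler0c ?mul_conjC_ge0.
  under eq_bigr => x _ do under eq_bigr => y _ do
    rewrite /dicke_mix mulr_sumr mulr_suml.
  under eq_bigr => x _ do rewrite exchange_big /=.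
  rewrite exchange_big /=; apply: eq_bigr => i _.
  rewrite /amp rmorph_sum /= mulr_suml mulr_sumr; apply: eq_bigr => x _.
  rewrite mulr_sumr mulr_sumr; apply: eq_bigr => y _.
  rewrite rmorphM /= conjCK; ring.
- rewrite trace_ptrace0 ptrace_dicke_mix weight_on0 eqxx cards0.
  by rewrite dicke_marginal00 c_sum1.
Qed.

Lemma dicke_mix_inj : injective (@dicke_mix R n).
Proof.
move=> c c' e; apply/funext => i.
have : (0 < #|[set z : bits n | vanishes_on set0 z && (weight z == i)]|)%N.
  by rewrite card_vanishes_on_weight setC0 cardsT card_ord bin_gt0 -ltnS.
case/card_gt0P => x; rewrite inE => /andP[_ /eqP wx].
move: (congr1 (fun A => A x x) e); rewrite !dicke_mixE eqxx => /complexI.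
rewrite /dicke_entry wx inord_val => /(congr1 (fun r => r * 'C(n, i)%:R)).
by rewrite !divfK // pnatr_eq0 -lt0n bin_gt0 -ltnS.
Qed.

Lemma sum_coef c k s :
  \sum_(i < n.+1) c i * coef R n k s i = 'C(k, s)%:R * dicke_marginal c k s.
Proof.
rewrite /dicke_marginal mulr_sumr; apply: eq_bigr => i _.
by rewrite /coef /dicke_entry inord_val natrM; ring.
Qed.

End DickeMixture.

Lemma Lval_gt (R : realType) n (A : op R n) k :
    (exists B, is_density B /\ B <> A /\
       forall S : {set 'I_n}, (#|S| <= k)%N -> ptrace S B = ptrace S A) ->
  (k < Lval A)%N.
Proof.
move=> [B [dB [neqBA same]]].
(* [Lval] defaults to [n], so [k < n] is needed: the full set already separates B from A. *)
have kn : (k < n)%N.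
  rewrite ltnNge; apply/negP => nk; apply: neqBA.
  by rewrite -(ptrace_setT B) -(ptrace_setT A) same // cardsT card_ord.
apply: (big_ind (fun m => k < m)%N) => // [p q hp hq|F /asboolP detF].
  by rewrite leq_min hp hq.
rewrite ltnNge; apply/negP => hmax; apply/neqBA/detF => // S SF.
by apply/same/leq_trans/hmax; apply: leq_bigmax_cond.
Qed.

Theorem mainTheorem15 (R : realType) (n k : nat) (lam : 'I_n.+1 -> R) :
  (forall i, 0 <= lam i) ->
  \sum_(i < n.+1) lam i = 1 ->
  (1 <= k)%N -> (k <= n)%N ->
  (exists a : 'I_n.+1 -> R,
      (forall i, 0 <= a i) /\ a <> lam /\
      (forall s : nat, (s <= k)%N ->
         \sum_(i < n.+1) a i * @coef R n k s i
         = \sum_(i < n.+1) lam i * @coef R n k s i)) ->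
  (k.+1 <= @Lval R n (@dicke_mix R n lam))%N.
Proof.
move=> _ lam_sum1 _ kn [a [a_ge0 [a_neq system]]].
have marg_k t : (t <= k)%N -> dicke_marginal a k t = dicke_marginal lam k t.
  move=> tk; move: (system t tk); rewrite !sum_coef.
  by apply: mulfI; rewrite pnatr_eq0 -lt0n bin_gt0.
have marg := dicke_marginal_eq_le kn marg_k.
have a_sum1 : \sum_(i < n.+1) a i = 1.
  by rewrite -dicke_marginal00 marg // dicke_marginal00.
apply: Lval_gt; exists (dicke_mix a); split; first exact: is_density_dicke_mix.
split; first by move/dicke_mix_inj.
move=> S Sk; apply/funext => x; apply/funext => y.
by rewrite !ptrace_dicke_mix marg // weight_on_le.
Qed.
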